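(* Let $d,a_1,\ldots,a_n$ be positive integers and $c_1,\ldots,c_n\ge 0$ integers. Then the ideal $x_1^{c_1}\cdots x_n^{c_n}I_{(d;a_1,\ldots,a_n)}$ can be extended by linear quotients to $I_{(d+\sum_{i=1}^nc_i;\,a_1+c_1,\ldots,a_n+c_n)}$.
   Context: $S=K[x_1,\ldots,x_n]$, $G(I)$ = minimal monomial generating set. For positive integers $d,a_1,\dots,a_n$, $I_{(d;a_1,\ldots,a_n)}\subset S$ is the monomial ideal generated by all monomials $u$ of degree $d$ with $\deg_{x_i}(u)\le a_i$ for all $i$ (ideal of Veronese type). For monomial ideals $I\subseteq J$ with $G(I)\subseteq G(J)$, $I$ can be extended by linear quotients to $J$ if $G(J)\setminus G(I)$ can be ordered $v_1,\ldots,v_m$ such that for each $i=0,\ldots,m-1$ the colon ideal $(G(I),v_1,\ldots,v_i):v_{i+1}$ is generated by variables. *)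

From mathcomp Require Import all_boot all_algebra.
From mathcomp Require Import mpoly.
Set Implicit Arguments. Unset Strict Implicit. Unset Printing Implicit Defensive.
Import GRing.Theory.
Local Open Scope ring_scope.

(* Monomials of S = K[x_1,...,x_n] are encoded by their exponent vectors
   m : 'X_{1..n}; the monomial itself is 'X_[m] : {mpoly K[n]}. *)

Definition in_mon_ideal (K : fieldType) (n : nat) (G : pred 'X_{1..n})
    (p : {mpoly K[n]}) : Prop :=
  exists (gs : seq 'X_{1..n}) (rs : seq {mpoly K[n]}),
    [/\ all G gs, size rs = size gs &
        p = \sum_(i < size gs) rs`_i * 'X_[nth 0%MM gs i]].

Definition colon_gen_by_vars (K : fieldType) (n : nat) (G : pred 'X_{1..n})
    (v : 'X_{1..n}) : Prop :=
  exists S : {set 'I_n}, forall p : {mpoly K[n]},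
    in_mon_ideal G (p * 'X_[v]) <->
    in_mon_ideal [pred m : 'X_{1..n} | [exists i in S, m == U_(i)%MM]] p.

(* I (with minimal monomial generating set GI) can be extended by linear
   quotients to J (with minimal monomial generating set GJ): GI is a subset
   of GJ and GJ \ GI can be ordered v_1,...,v_m so that for every
   i = 0..m-1, (GI, v_1,...,v_i) : v_{i+1} is generated by variables. *)
Definition ext_lin_quot (K : fieldType) (n : nat) (GI GJ : pred 'X_{1..n})
    : Prop :=
  {subset GI <= GJ} /\
  exists vs : seq 'X_{1..n},
    [/\ uniq vs,
        (forall m, m \in vs = GJ m && ~~ GI m) &
        forall i, (i < size vs)%N ->
          colon_gen_by_vars K
            [pred m | GI m || (m \in take i vs)] (nth 0%MM vs i)].

(* G(I_(d; a_1..a_n)): all monomials u of degree d with deg_{x_i} u <= a_i.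
   (These all have degree d, so they form the minimal generating set.) *)
Definition veronese_gens (n d : nat) (a : 'I_n -> nat) : pred 'X_{1..n} :=
  [pred m : 'X_{1..n} | (mdeg m == d) && [forall i, (m i <= a i)%N]].

Definition shift_gens (n : nat) (c : 'X_{1..n}) (G : pred 'X_{1..n})
    : pred 'X_{1..n} :=
  [pred m : 'X_{1..n} | (c <= m)%MM && G (m - c)%MM].

(* Fix c, put J := I_(d + |c|; a + c) and I := x^c I_(d; a).  A generator u
   of J lies in G(I) exactly when c <= u, i.e. when its deficit
   delta(u) = sum_i max(c_i - u_i, 0) vanishes.  We list G(J) \ G(I) by
   increasing deficit and, among monomials of equal deficit, by decreasing
   monomial order: this is the order of the pair (delta(u), u) in the
   lexicographic product of nat with the dual monomial order.  The proof
   rests on an exchange lemma: if v, w are in G(J) and w comes before v,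
   then for some k with v_k < w_k and some l the monomial v x_k / x_l is in
   G(J) and again comes before v.  (Either delta(w) < delta(v), and x_k
   lowers the deficit, or the deficits agree, k is the first position where
   v and w differ, and the exchange moves v up in the monomial order.)
   Hence the colon ideal, by x^v, of the generators preceding v is
   generated by the variables x_k admitting such an exchange. *)

From mathcomp Require Import all_boot all_order all_algebra.
From mathcomp Require Import mpoly zify.
Import Order.TTheory GRing.Theory.
Set Implicit Arguments. Unset Strict Implicit. Unset Printing Implicit Defensive.

Section MonomialIdeals.
Local Open Scope ring_scope.
Variables (K : fieldType) (n : nat).
Implicit Types (G : pred 'X_{1..n}) (p q : {mpoly K[n]}).

Lemma in_mon_ideal0 G : in_mon_ideal G (0 : {mpoly K[n]}).
Proof. by exists [::], [::]; split=> //; rewrite big_ord0. Qed.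

Lemma in_mon_idealMX G g (r : {mpoly K[n]}) : G g -> in_mon_ideal G (r * 'X_[g]).
Proof. by move=> Gg; exists [:: g], [:: r]; rewrite /= Gg big_ord1. Qed.

Lemma in_mon_idealD G p q :
  in_mon_ideal G p -> in_mon_ideal G q -> in_mon_ideal G (p + q).
Proof.
move=> [gs [rs [Gs Hs ->]]] [gs' [rs' [Gs' Hs' ->]]].
exists (gs ++ gs'), (rs ++ rs'); rewrite all_cat Gs Gs' !size_cat Hs Hs'.
split=> //; rewrite big_split_ord /=; congr (_ + _); apply: eq_bigr => i _.
  by rewrite !nth_cat Hs ltn_ord.
by rewrite !nth_cat Hs ltnNge leq_addr /= addKn.
Qed.

Lemma in_mon_idealP G p : in_mon_ideal G p <->
  (forall m, m \in msupp p -> exists2 g, G g & (g <= m)%MM).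
Proof.
split=> [[gs [rs [Gs Hs ->]]] m|divG].
  move=> /msupp_sum_le /flattenP [s /mapP [i _ ->]].
  rewrite (perm_mem (msuppMX _ _)) => /mapP [m' _ ->].
  exists (nth 0%MM gs i); first by apply: (allP Gs); rewrite mem_nth.
  by apply/mnm_lepP => j; rewrite mnmDE leq_addr.
rewrite [p]mpolyE big_seq; apply: (big_ind (in_mon_ideal G)).
- exact: in_mon_ideal0.
- exact: in_mon_idealD.
move=> m /divG [g Gg le_gm].
by rewrite -(submK le_gm) mpolyXD scalerAl; apply: in_mon_idealMX.
Qed.

Lemma colon_gen_by_varsP G v (S : {set 'I_n}) :
  (forall m, (exists2 g, G g & (g <= v + m)%MM) <->
             exists2 k, k \in S & (0 < m k)%N) ->
  colon_gen_by_vars K G v.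
Proof.
move=> divS; exists S => p; rewrite !in_mon_idealP.
split=> [divG m mp|divV m'].
  have [|k kS mk_gt0] := (divS m).1.
    by apply: divG; rewrite (perm_mem (msuppMX _ _)) map_f.
  exists U_(k)%MM; first by apply/existsP; exists k; rewrite kS /=.
  by apply/mnm_lepP => j; rewrite mnm1E; case: eqP => // <-.
rewrite (perm_mem (msuppMX _ _)) => /mapP [m /divV [g Gg le_gm] ->].
move: Gg => /existsP [k /andP [kS /eqP g_eq]].
apply/divS; exists k => //.
by move/mnm_lepP: le_gm => /(_ k); rewrite g_eq mnm1E eqxx.
Qed.

End MonomialIdeals.

Lemma mem_take_sorted (T : eqType) (disp : Order.disp_t) (U : orderType disp)
    (f : T -> U) (s : seq T) (x0 : T) (i : nat) (x : T) :
  sorted <%O (map f s) -> (i < size s)%N ->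
  (x \in take i s) = (x \in s) && (f x < f (nth x0 s i))%O.
Proof.
move=> sorted_s lt_i_s; have [xs|xNs] := boolP (x \in s); last first.
  by apply: contraNF xNs; apply: mem_take.
have lt_x_s : (index x s < size s)%N by rewrite index_mem.
rewrite in_take // -{2}(nth_index x0 xs) -!(nth_map x0 (f x0) f) //.
by rewrite (lt_sorted_ltn_nth (f x0) sorted_s) ?inE ?size_map.
Qed.

Lemma sorted_enum_monomials (n : nat) (disp : Order.disp_t) (U : orderType disp)
    (f : 'X_{1..n} -> U) (P : pred 'X_{1..n}) (D : nat) :
  injective f -> (forall m, P m -> (mdeg m <= D)%N) ->
  exists vs : seq 'X_{1..n}, [/\ uniq vs, vs =i P & sorted <%O (map f vs)].
Proof.
move=> f_inj P_bounded.
pose s := [seq val m | m <- enum {: 'X_{1..n < D.+1}} & P (val m)].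
have uniq_s : uniq s.
  by rewrite (map_inj_uniq val_inj) filter_uniq // enum_uniq.
exists (sort (relpre f <=%O) s); split.
- by rewrite sort_uniq.
- move=> m; rewrite mem_sort; apply/mapP/idP => [[m' + ->]|Pm].
    by rewrite mem_filter => /andP [].
  have deg_m : (mdeg m < D.+1)%N by rewrite ltnS P_bounded.
  by exists (BMultinom deg_m); rewrite // mem_filter /= mem_enum andbT.
by rewrite -sort_map sort_lt_sorted map_inj_uniq.
Qed.

Lemma ltn_sum_strict (n : nat) (F G : 'I_n -> nat) (k : 'I_n) :
  (forall i, F i <= G i)%N -> (F k < G k)%N -> (\sum_i F i < \sum_i G i)%N.
Proof.
move=> le_FG lt_FGk; rewrite (bigD1 k) //= [X in (_ < X)%N](bigD1 k) //=.
by rewrite -addSn leq_add // leq_sum.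
Qed.

Section Exchange.
Variables (n : nat) (c : 'X_{1..n}).
Implicit Types (u v w : 'X_{1..n}) (k l : 'I_n).

(* The deficit of u with respect to c: the degree of x^c / gcd(x^c, x^u). *)
Definition deficit u : nat := \sum_i (c i - u i).

Definition exch v k l : 'X_{1..n} := (v - U_(l) + U_(k))%MM.

Lemma exchE v k l j : exch v k l j = (v j - (l == j) + (k == j))%N.
Proof. by rewrite mnmDE mnmBE !mnm1E. Qed.

Lemma deficit_eq0 u : (deficit u == 0%N) = (c <= u)%MM.
Proof.
rewrite sum_nat_eq0; apply/forallP/mnm_lepP => le_cu i.
  by rewrite -subn_eq0; apply: le_cu.
by rewrite subn_eq0 le_cu.
Qed.

Lemma deficitDmdeg u : (deficit u + mdeg u)%N = \sum_i maxn (u i) (c i).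
Proof. by rewrite mdegE -big_split; apply: eq_bigr => i _ /=; lia. Qed.

(* An exchange lowers the deficit by one if x_k was missing from c's part,
   and raises it by one if x_l was not in excess over c. *)
Lemma deficit_exch v k l : k != l -> (0 < v l)%N ->
  (deficit (exch v k l) + (v k < c k) = deficit v + (v l <= c l))%N.
Proof.
move=> neq_kl vl_gt0; have neq_lk : l != k by rewrite eq_sym.
rewrite /deficit (bigD1 k) //= (bigD1 l) //= [in RHS](bigD1 k) //=.
rewrite [in RHS](bigD1 l) //= (eq_bigr (fun i => c i - v i)); last first.
  move=> i /andP [ki li]; rewrite exchE [l == i]eq_sym [k == i]eq_sym.
  by rewrite (negbTE li) (negbTE ki) subn0 addn0.
rewrite !exchE (negbTE neq_kl) (negbTE neq_lk) (eqxx k) (eqxx l) /=.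
by case: ltnP => /= ?; case: leqP => /= ?; lia.
Qed.

Definition rank u : nat *l ('X_{1..n})^d := (deficit u, u).

Lemma rank_inj : injective rank. Proof. by move=> u v []. Qed.

Lemma lt_rank w v : (rank w < rank v)%O =
  (deficit w < deficit v)%N || (deficit w == deficit v) && (v < w)%O.
Proof. by rewrite ltxi_pair leEnat ltEdual; case: ltngtP. Qed.

Variables (d : nat) (a : 'I_n -> nat).
Local Notation J := (veronese_gens (d + mdeg c) (fun i => a i + c i)%N).
Local Notation I := (shift_gens c (veronese_gens d a)).

Lemma JP u :
  reflect (mdeg u = (d + mdeg c)%N /\ forall i, (u i <= a i + c i)%N) (J u).
Proof.
by apply: (iffP andP) => -[/eqP deg_u /forallP le_u]; split=> //; apply/forallP.
Qed.

Lemma shift_gensE u : I u = J u && (deficit u == 0%N).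
Proof.
rewrite deficit_eq0 /shift_gens /= [RHS]andbC.
have [le_cu|] //= := boolP (c <= u)%MM.
have deg_u : mdeg u = (mdeg (u - c) + mdeg c)%N by rewrite -mdegD submK.
rewrite /veronese_gens /= deg_u eqn_add2r; congr (_ && _).
by apply: eq_forallb => i; rewrite mnmBE; move/mnm_lepP: le_cu => /(_ i); lia.
Qed.

Lemma J_exch v k l : J v -> k != l -> (0 < v l)%N -> (v k < a k + c k)%N ->
  J (exch v k l).
Proof.
move=> /JP [deg_v le_v] neq_kl vl_gt0 vk_lt; apply/JP; split.
  have le_lv : (U_(l) <= v)%MM.
    by apply/mnm_lepP => i; rewrite mnm1E; case: eqP => // <-.
  by rewrite mdegD mdeg1 -deg_v -[in RHS](submK le_lv) mdegD mdeg1.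
move=> i; rewrite exchE; move: (le_v i).
by case: (eqVneq k i) => [<-|_]; case: (eqVneq l i) => [li|_] //=; lia.
Qed.

Hypothesis d_gt0 : (0 < d)%N.

Lemma exchange_deficit v w : J v -> J w -> (deficit w < deficit v)%N ->
  exists k l, [/\ (v k < w k)%N, J (exch v k l) &
                  (deficit (exch v k l) < deficit v)%N].
Proof.
move=> Jv Jw lt_wv; have /JP [deg_v le_v] := Jv.
have [k /andP [vk_ck vk_wk]] : exists k, (v k < c k) && (v k < w k).
  apply/existsP; apply: contraTT lt_wv => /existsPn no_k; rewrite -leqNgt.
  apply: leq_sum => i _; move: (no_k i).
  by rewrite negb_and -!leqNgt => /orP []; lia.
have [l cl_vl] : exists l, (c l < v l)%N.
  apply/existsP; apply: contraTT d_gt0 => /existsPn no_l; rewrite -leqNgt.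
  have : (mdeg v <= mdeg c)%N.
    by rewrite !mdegE; apply: leq_sum => i _; rewrite leqNgt no_l.
  by rewrite deg_v; lia.
have neq_kl : k != l by apply: contraTneq vk_ck => ->; rewrite -leqNgt ltnW.
have vl_gt0 : (0 < v l)%N by lia.
exists k, l; split=> //; first by apply: J_exch => //; move: (le_v k); lia.
by have := deficit_exch neq_kl vl_gt0; rewrite vk_ck leqNgt cl_vl /=; lia.
Qed.

(* Exchange lemma, second case: equal deficits and w lexicographically
   larger than v; the first position k where they differ has v_k < w_k. *)
Lemma exchange_lex v w : J v -> J w -> deficit w = deficit v -> (v < w)%O ->
  exists k l, [/\ (v k < w k)%N, J (exch v k l) & (rank (exch v k l) < rank v)%O].
Proof.
move=> Jv Jw eq_def; have [/JP [deg_v le_v] /JP [deg_w le_w]] := (Jv, Jw).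
have eq_deg : mdeg v = mdeg w by rewrite deg_v deg_w.
case/(ltmcP eq_deg) => k agree vk_wk.
have [l /andP [wl_vl exch_ok]] :
    exists l, (w l < v l) && ((v k < c k) || (c l < v l)).
  apply/existsP; apply: contraT => /existsPn no_l.
  have [vk_ck|ck_vk] := ltnP (v k) (c k).
    have : (mdeg v < mdeg w)%N.
      rewrite !mdegE; apply: (ltn_sum_strict (k := k)) => // i.
      by move: (no_l i); rewrite vk_ck andbT -leqNgt.
    by rewrite eq_deg ltnn.
  have : (\sum_i maxn (v i) (c i) < \sum_i maxn (w i) (c i))%N.
    apply: (ltn_sum_strict (k := k)); last by lia.
    move=> i; move: (no_l i).
    by rewrite negb_and negb_or -!leqNgt => /orP [|/andP [_]]; lia.
  by rewrite -!deficitDmdeg eq_def eq_deg ltnn.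
have lt_kl : (k < l)%N.
  case: ltngtP => [//|/agree wl_eq|/val_inj eq_kl].
    by rewrite wl_eq ltnn in wl_vl.
  by rewrite eq_kl in vk_wk; lia.
have neq_kl : k != l by rewrite neq_ltn lt_kl.
have vl_gt0 : (0 < v l)%N by lia.
have Je : J (exch v k l) by apply: J_exch => //; move: (le_w k); lia.
exists k, l; split=> //.
have lt_ve : (v < exch v k l)%O.
  have /JP [deg_e _] := Je; apply/ltmcP; first by rewrite deg_v deg_e.
  exists k; last by rewrite exchE eq_sym (negbTE neq_kl) eqxx; lia.
  move=> j lt_jk; rewrite exchE; case: eqVneq => [eq_lj|_].
    by rewrite -eq_lj in lt_jk; lia.
  case: eqVneq => [eq_kj|_]; last by rewrite subn0 addn0.
  by rewrite -eq_kj ltnn in lt_jk.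
have le_def : (deficit (exch v k l) <= deficit v)%N.
  have := deficit_exch neq_kl vl_gt0; move: exch_ok.
  by case: ltnP => /= ?; case: leqP => /= ?; lia.
by rewrite lt_rank lt_ve andbT orbC -leq_eqVlt.
Qed.

Lemma exchange v w : J v -> J w -> (rank w < rank v)%O ->
  exists k l, [/\ (v k < w k)%N, J (exch v k l) & (rank (exch v k l) < rank v)%O].
Proof.
move=> Jv Jw; rewrite lt_rank => /orP [lt_def|/andP [/eqP eq_def lt_vw]].
  have [k [l [vk_wk Je lt_e]]] := exchange_deficit Jv Jw lt_def.
  by exists k, l; rewrite lt_rank lt_e.
exact: exchange_lex.
Qed.

(* The colon ideal of the generators of J preceding v, by x^v, is generated
   by the variables x_k for which some exchange v x_k / x_l precedes v. *)
Lemma colon_initial_segment (K : fieldType) (G : pred 'X_{1..n}) v :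
  J v -> (forall u, G u = J u && (rank u < rank v)%O) -> colon_gen_by_vars K G v.
Proof.
move=> Jv G_def.
apply: (@colon_gen_by_varsP K n G v [set k | [exists l, G (exch v k l)]]) => m.
split=> [[g] | [k]].
  rewrite G_def => /andP [Jg lt_gv] /mnm_lepP le_g.
  have [k [l [vk_gk Je lt_e]]] := exchange Jv Jg lt_gv.
  exists k; first by rewrite inE; apply/existsP; exists l; rewrite G_def Je.
  by move: (le_g k); rewrite mnmDE; lia.
rewrite inE => /existsP [l Ge] mk_gt0; exists (exch v k l) => //.
apply/mnm_lepP => j; rewrite exchE mnmDE.
by case: (eqVneq k j) => [<-|_]; case: (l == j) => /=; lia.
Qed.

Lemma initial_segmentE v u : J v -> ~~ I v ->
  I u || (J u && ~~ I u && (rank u < rank v)%O) = J u && (rank u < rank v)%O.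
Proof.
rewrite !shift_gensE => -> /= def_v; case: (J u) => //=.
by case: eqP => //= def_u; rewrite lt_rank def_u lt0n def_v.
Qed.

End Exchange.

Theorem lemma3p6 (K : fieldType) (n d : nat) (a : 'I_n -> nat)
    (c : 'X_{1..n}) :
  (0 < d)%N -> (forall i, 0 < a i)%N ->
  ext_lin_quot K (shift_gens c (veronese_gens d a))
    (veronese_gens (d + mdeg c) (fun i => a i + c i)%N).
Proof.
move=> d_gt0 _; split=> [u|].
  by rewrite -!topredE /= shift_gensE => /andP [].
have [|vs [uniq_vs mem_vs sorted_vs]] := sorted_enum_monomials (@rank_inj n c)
  (P := [pred u | veronese_gens (d + mdeg c) (fun i => a i + c i)%N u &&
                  ~~ shift_gens c (veronese_gens d a) u]) (D := d + mdeg c).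
  by move=> u /andP [/JP [-> _] _].
exists vs; split=> // i lt_i_vs; set v := nth 0%MM vs i.
have := mem_nth 0%MM lt_i_vs; rewrite -/v mem_vs inE => /andP [Jv nIv].
apply: (colon_initial_segment d_gt0 K Jv) => u /=.
rewrite (mem_take_sorted 0%MM _ sorted_vs lt_i_vs) mem_vs inE.
exact: initial_segmentE.
Qed.
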